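(* Let $k$ be a field, $S=k[x_1,\dots,x_n]$, and let $\Delta$ be a connected simplicial graph on $[n]$ of genus $0$ (a tree). Let $M$ be an indecomposable square-free $S$-module (not necessarily Cohen--Macaulay) with support on $\Delta$, locally of rank $1$, of multi-degree $(0,0,\dots,0)$. Then $M$ is isomorphic to a module for which, after identifying $M_{\{v\}}=k$ for every vertex $v$ and $M_e=k$ for every edge $e$, each map $\varphi_{ve}:M_{\{v\}}\to M_e$ equals $1$ (the identity) if $v\in e$ (and is $0$ otherwise).
   Context: $S$ is $\mathbf{Z}^n$-graded. A finitely generated $\mathbf{Z}^n$-graded $S$-module $M$ is square-free if $M_{\mathbf{a}}=0$ for $\mathbf{a}\notin\mathbf{N}^n$ and multiplication by $x_i$, $M_{\mathbf{a}}\to M_{\mathbf{a}+\mathbf{e}_i}$, is bijective whenever $\mathbf{a}\in\mathbf{N}^n$ and $a_i>0$. For $F\subseteq[n]$, $M_F$ is the component of $M$ in the degree given by the indicator vector of $F$, and for $F\subseteq G$, $\varphi_{FG}:M_F\to M_G$ is multiplication by $\prod_{i\in G\setminus F}x_i$. A simplicial graph on $[n]$ is a $1$-dimensional simplicial complex $\Delta$ with vertex set $[n]$; $I_\Delta$ is generated by $\prod_{i\in\sigma}x_i$ for $\sigma\notin\Delta$. $M$ has support on $\Delta$ if its annihilator is $I_\Delta$. $M$ is locally of rank $1$ if $\dim_k M_F=1$ for every edge $F$. The multi-degree is $\mathbf{d}$ with $d_i=\dim_k M_{\{i\}}-1$. The genus is $\dim_k\widetilde H_1(\Delta;k)$. 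*)

From HB Require Import structures.
From mathcomp Require Import all_boot all_order all_algebra.
From mathcomp Require Import mpoly.
Set Implicit Arguments. Unset Strict Implicit. Unset Printing Implicit Defensive.
Import Order.TTheory GRing.Theory Num.Theory.
Local Open Scope ring_scope.

Definition deg (n : nat) := {ffun 'I_n -> int}.
Definition degle n (a b : deg n) : bool := [forall i, a i <= b i].
Definition degnonneg n (a : deg n) : bool := [forall i, 0 <= a i].
Definition degS n (a : deg n) (i : 'I_n) : deg n :=
  [ffun j => a j + (j == i)%:R].
Definition degaddm n (a : deg n) (m : 'X_{1..n}) : deg n :=
  [ffun j => a j + (m j)%:Z].
Definition ind n (F : {set 'I_n}) : deg n := [ffun j => ((j \in F) : nat)%:Z].

(* A Z^n-graded S-module, S = k[x_1..x_n]: graded pieces M_a = k^(gdim a)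
   (row vectors), and gmul a b = multiplication by x^(b-a) : M_a -> M_b
   (acting on the right on row vectors), meaningful for a <= b. *)
Record gmod (k : fieldType) (n : nat) := GMod {
  gdim : deg n -> nat;
  gmul : forall a b : deg n, 'M[k]_(gdim a, gdim b);
  gmul_id : forall a, gmul a a = 1%:M;
  gmul_comp : forall a b c, degle a b -> degle b c ->
     gmul a b *m gmul b c = gmul a c }.

Section Defs.
Variables (k : fieldType) (n : nat).

Definition fingen (M : gmod k n) : Prop :=
  exists s : seq {a : deg n & 'rV[k]_(gdim M a)},
    forall b : deg n,
      (1%:M <= \sum_(g <- s | degle (tag g) b)
                   << tagged g *m gmul M (tag g) b >>)%MS.

Definition sqfree (M : gmod k n) : Prop :=
  (forall a, ~~ degnonneg a -> gdim M a = 0%N) /\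
  (forall a i, degnonneg a -> 0 < a i ->
     row_free (gmul M a (degS a i)) && row_full (gmul M a (degS a i))).

(* f annihilates M: f . v = 0 for every homogeneous v; the component of
   f . v (v in M_a) in degree a+m is  f_m x^m v. *)
Definition annihilates (M : gmod k n) (f : {mpoly k[n]}) : Prop :=
  forall (a : deg n) (v : 'rV[k]_(gdim M a)) (m : 'X_{1..n}),
    f@_m *: (v *m gmul M a (degaddm a m)) = 0.

Definition in_ideal (G : {mpoly k[n]} -> Prop) (f : {mpoly k[n]}) : Prop :=
  exists s : seq ({mpoly k[n]} * {mpoly k[n]}),
    (forall p, p \in s -> G p.2) /\ f = \sum_(p <- s) p.1 * p.2.

Definition I_Delta (D : {set {set 'I_n}}) (f : {mpoly k[n]}) : Prop :=
  in_ideal (fun g => exists sigma : {set 'I_n},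
              sigma \notin D /\ g = \prod_(i in sigma) 'X_i) f.

Definition support_on (M : gmod k n) (D : {set {set 'I_n}}) : Prop :=
  forall f, annihilates M f <-> I_Delta D f.

Definition loc_rank1 (M : gmod k n) (D : {set {set 'I_n}}) : Prop :=
  forall F, F \in D -> #|F| = 2 -> gdim M (ind F) = 1%N.

(* multi-degree (0,...,0): dim M_{i} - 1 = 0 *)
Definition multideg0 (M : gmod k n) : Prop :=
  forall i : 'I_n, (gdim M (ind [set i]))%:Z - 1 = 0.

Definition gsub (M : gmod k n) (U : forall a, 'M[k]_(gdim M a)) : Prop :=
  forall a b, degle a b -> (U a *m gmul M a b <= U b)%MS.

Definition decomposable (M : gmod k n) : Prop :=
  exists (U W : forall a, 'M[k]_(gdim M a)),
    [/\ @gsub M U, @gsub M W,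
        (forall a, (U a + W a == 1%:M)%MS && mxdirect (U a + W a)),
        (exists a, U a != 0) & (exists a, W a != 0)].

Definition indecomposable (M : gmod k n) : Prop :=
  (exists a, (0 < gdim M a)%N) /\ ~ decomposable M.

Definition giso (M N : gmod k n) : Prop :=
  exists f : forall a, 'M[k]_(gdim M a, gdim N a),
    (forall a, row_free (f a) && row_full (f a)) /\
    (forall a b, degle a b -> f a *m gmul N a b = gmul M a b *m f b).

End Defs.

Definition simplicial_graph n (D : {set {set 'I_n}}) : Prop :=
  [/\ forall F G : {set 'I_n}, F \in D -> G \subset F -> G \in D,
      forall v : 'I_n, [set v] \in D,
      forall F, F \in D -> (#|F| <= 2)%N &
      exists F, (F \in D) && (#|F| == 2)%N].

Definition adj n (D : {set {set 'I_n}}) : rel 'I_n :=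
  fun i j => (i != j) && ([set i; j] \in D).

Definition connected_cx n (D : {set {set 'I_n}}) : Prop :=
  forall i j : 'I_n, connect (adj D) i j.

(* edges and the simplicial boundary map C_1 -> C_0 (edge {i<j} |-> j - i) *)
Definition edges n (D : {set {set 'I_n}}) : {set {set 'I_n}} :=
  [set F in D | #|F| == 2%N].

Definition bdmx (k : fieldType) n (D : {set {set 'I_n}}) :
  'M[k]_(#|edges D|, n) :=
  \matrix_(r < #|edges D|, j < n)
    (let e : {set 'I_n} := @enum_val _ (mem (edges D)) r in
     if j \in e then (if [exists i in e, (i < j)%N] then 1 else -1) else 0).

(* genus = dim_k H~_1(Delta; k) = dim ker (boundary_1) *)
Definition genus (k : fieldType) n (D : {set {set 'I_n}}) : nat :=
  (#|edges D| - \rank (bdmx k D))%N.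

(* By square-freeness, multiplication M_a -> M_b is an isomorphism whenever
   supp b = supp a, and M_a = 0 unless supp a is a face of the graph; so M is
   the diagram of the spaces M_F over the faces F, and any 0/1 labelling of the
   faces that is compatible with the nonzero maps splits M.  If a map
   phi_{ve} vanished, the vertices reachable from the other end of e through
   edges with both maps nonzero cannot reach v (a tree has no cycle through e),
   and labelling by this component splits M.  Hence every phi_{ve} is an
   isomorphism of lines, and since a tree has no cycles, the generators of the
   vertex lines can be rescaled outward from a root to make all of them 1. *)

From HB Require Import structures.
From mathcomp Require Import all_boot all_order all_algebra.
From mathcomp Require Import mpoly zify.
Set Implicit Arguments. Unset Strict Implicit. Unset Printing Implicit Defensive.
Import Order.TTheory GRing.Theory Num.Theory.
Local Open Scope ring_scope.

Section Matrices.
Variable k : fieldType.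

Definition isomx m p (A : 'M[k]_(m, p)) := row_free A && row_full A.

Lemma isomx1 m : isomx (1%:M : 'M[k]_m).
Proof. by rewrite /isomx -row_leq_rank -col_leq_rank mxrank1 leqnn. Qed.

Lemma isomx_mul m r p (A : 'M[k]_(m, r)) (B : 'M[k]_(r, p)) :
  isomx A -> isomx B -> isomx (A *m B).
Proof.
rewrite /isomx -!row_leq_rank -!col_leq_rank => /andP[fA gA] /andP[fB gB].
have := rank_leq_row A; have := rank_leq_col A.
have := rank_leq_row B; have := rank_leq_col B.
by rewrite mxrankMfree -?row_leq_rank //; lia.
Qed.

Lemma mx_dim0l p q (A : 'M[k]_(p, q)) : p = 0%N -> A = 0.
Proof. by move=> p0; apply/eqP; rewrite -mxrank_eq0; have := rank_leq_row A; lia. Qed.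

Lemma mx_dim0r p q (A : 'M[k]_(p, q)) : q = 0%N -> A = 0.
Proof. by move=> q0; apply/eqP; rewrite -mxrank_eq0; have := rank_leq_col A; lia. Qed.

Lemma const_mx1_neq0 p : (0 < p)%N -> (const_mx 1 : 'rV[k]_p) != 0.
Proof.
by move=> p_gt0; apply/eqP=> /matrixP/(_ 0 (Ordinal p_gt0))/eqP; rewrite !mxE oner_eq0.
Qed.

Lemma row_free_dim1 p q (A : 'M[k]_(p, q)) : p = 1%N -> A != 0 -> row_free A.
Proof.
move=> p1; rewrite -mxrank_eq0 -row_leq_rank => rA.
by have := rank_leq_row A; lia.
Qed.

Lemma rV_dim1_scale p (u v : 'rV[k]_p) : p = 1%N -> v != 0 -> exists a, u = a *: v.
Proof.
move=> p1 /(row_free_dim1 (erefl 1%N)); rewrite -row_leq_rank => rv.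
by apply/sub_rVP/submx_full; rewrite -col_leq_rank; lia.
Qed.

End Matrices.

Section Degrees.
Variable n : nat.

Definition supp (a : deg n) : {set 'I_n} := [set i | 0 < a i].

Lemma supp_ind (s : {set 'I_n}) : supp (ind s) = s.
Proof. by apply/setP=> i; rewrite inE ffunE; case: (i \in s). Qed.

Lemma ind_nonneg (s : {set 'I_n}) : degnonneg (ind s).
Proof. by apply/forallP=> i; rewrite ffunE; case: (i \in s). Qed.

Lemma degle_ind (s t : {set 'I_n}) : s \subset t -> degle (ind s) (ind t).
Proof.
move=> st; apply/forallP=> i; rewrite !ffunE.
by case si: (i \in s); rewrite ?ler0n // (subsetP st _ si).
Qed.

Lemma degle_ind_supp (a : deg n) : degnonneg a -> degle (ind (supp a)) a.
Proof.
move=> a_ge0; apply/forallP=> i; rewrite !ffunE inE.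
by move: (forallP a_ge0 i); case: (a i) => [[|m]|m].
Qed.

Lemma supp_degle (a b : deg n) : degnonneg a -> degle a b -> supp a \subset supp b.
Proof.
move=> a_ge0 ab; apply/subsetP=> i; rewrite !inE => ai_gt0.
exact: lt_le_trans ai_gt0 (forallP ab i).
Qed.

End Degrees.

Section SquareFree.
Variables (k : fieldType) (n : nat) (M : gmod k n).
Hypothesis sqM : sqfree M.

Lemma gdim_gt0_nonneg a : (0 < gdim M a)%N -> degnonneg a.
Proof. by case: sqM => dim0 _; apply: contraLR => /dim0 ->. Qed.

(* Induction on the l^1 distance from a to b, one variable at a time. *)
Lemma gmul_isomx a b : degnonneg a -> degle a b -> supp b \subset supp a ->
  isomx (gmul M a b).
Proof.
pose dist (a : deg n) := (\sum_(i < n) `|b i - a i|)%N.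
move: {2}(dist a) (leqnn (dist a)) => N; elim: N a => [|N IH] a.
  rewrite leqn0 sum_nat_eq0 => /forallP ab0 _ _ _.
  suff -> : a = b by rewrite gmul_id isomx1.
  by apply/ffunP=> i; apply/eqP; rewrite eq_sym -subr_eq0 -absz_eq0 (implyP (ab0 i)).
move=> dist_a a_ge0 ab ba.
have [->|neab] := eqVneq a b; first by rewrite gmul_id isomx1.
have [i ltab] : exists i, a i < b i.
  apply/existsP; apply: contraNT neab; rewrite negb_exists => /forallP geab.
  apply/eqP/ffunP=> j; apply/eqP; rewrite eq_le (forallP ab j) /=.
  by rewrite leNgt geab.
have ai_gt0 : 0 < a i.
  have /(subsetP ba) : i \in supp b by rewrite inE (le_lt_trans (forallP a_ge0 i)).
  by rewrite inE.
have a_aS : degle a (degS a i) by apply/forallP=> j; rewrite ffunE lerDl ler0n.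
have aS_b : degle (degS a i) b.
  apply/forallP=> j; rewrite ffunE; case: eqP => [->|_].
    by move: ltab; lia.
  by rewrite addr0 (forallP ab j).
rewrite -(gmul_comp M a_aS aS_b); apply: isomx_mul.
  by case: sqM => _ /(_ a i a_ge0 ai_gt0).
apply: IH aS_b _.
- move: dist_a; rewrite /dist (bigD1 i) //= [X in (X <= N)%N](bigD1 i) //=.
  have -> : (\sum_(j < n | j != i) `|b j - degS a i j|)%N =
            (\sum_(j < n | j != i) `|b j - a j|)%N.
    by apply: eq_bigr => j ji; rewrite ffunE; case: eqP ji => // _ _; rewrite addr0.
  rewrite ffunE eqxx /=.
  have e1 : `|(b i - a i)%R|%N = `|(b i - (a i + 1))%R|%N.+1.
    by apply/eqP; rewrite -eqz_nat -addn1 PoszD !gez0_abs ?subr_ge0; lia.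
  by rewrite e1.
- by apply/forallP=> j; rewrite ffunE addr_ge0 ?(forallP a_ge0 j).
- by apply: subset_trans ba _; apply: supp_degle.
Qed.

Lemma gdim_supp_notin D : support_on M D ->
  forall a, degnonneg a -> supp a \notin D -> gdim M a = 0%N.
Proof.
move=> suppD a a_ge0 aD.
pose m : 'X_{1..n} := (\sum_(i in supp a) U_(i))%MM.
have Xm : \prod_(i in supp a) 'X_i = 'X_[m] :> {mpoly k[n]}.
  by rewrite /m (big_morph (@mpolyX n k) (@mpolyXD n k) (@mpolyX0 n k)).
have ann : annihilates M 'X_[m].
  apply/suppD; exists [:: (1, 'X_[m])]; split; last by rewrite big_seq1 mul1r.
  by move=> p; rewrite inE => /eqP -> /=; exists (supp a).
have supp_m : supp (degaddm a m) \subset supp a.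
  apply/subsetP=> j; rewrite [j \in supp _]inE ffunE.
  have [->|mj_gt0 _] := posnP (m j); first by rewrite addr0 inE.
  apply: contraTT mj_gt0 => ja; rewrite -leqNgt leqn0 mnm_sumE; apply/eqP/big1 => i ia.
  by rewrite mnm1E; case: eqP => // ij; rewrite -ij ia in ja.
have aam : degle a (degaddm a m) by apply/forallP=> j; rewrite ffunE lerDl.
have /andP[free _] := gmul_isomx a_ge0 aam supp_m.
apply/eqP; apply: contraT; rewrite -lt0n => dim_gt0.
have := ann a (const_mx 1) m; rewrite mcoeffX eqxx scale1r => /eqP.
by rewrite mulmx_free_eq0 // (negPf (const_mx1_neq0 _ dim_gt0)).
Qed.

Section ClassSplitting.
Variables (D : {set {set 'I_n}}) (cls : {set 'I_n} -> bool).
Hypothesis suppD : support_on M D.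

Lemma gmul_cross_class_eq0 :
  (forall s t, s \in D -> t \in D -> s \subset t -> cls s != cls t ->
     gmul M (ind s) (ind t) = 0) ->
  forall a b, degle a b -> cls (supp a) != cls (supp b) -> gmul M a b = 0.
Proof.
move=> cross a b ab ncls.
have [dima0|dima_gt0] := posnP (gdim M a); first exact: mx_dim0l.
have [dimb0|dimb_gt0] := posnP (gdim M b); first exact: mx_dim0r.
have a_ge0 := gdim_gt0_nonneg dima_gt0; have b_ge0 := gdim_gt0_nonneg dimb_gt0.
have suppD_of c : degnonneg c -> (0 < gdim M c)%N -> supp c \in D.
  by move=> c_ge0; apply: contraTT => /(gdim_supp_notin suppD c_ge0) ->.
have sab := supp_degle a_ge0 ab.
have /andP[_ full] : isomx (gmul M (ind (supp a)) a).
  by apply: gmul_isomx; rewrite ?ind_nonneg ?degle_ind_supp ?supp_ind.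
apply: (row_full_inj full); rewrite mulmx0 (gmul_comp M (degle_ind_supp a_ge0) ab).
rewrite -(gmul_comp M (degle_ind sab) (degle_ind_supp b_ge0)).
by rewrite cross ?mul0mx ?suppD_of.
Qed.

Lemma decomposable_of_class :
  (forall s t, s \in D -> t \in D -> s \subset t -> cls s != cls t ->
     gmul M (ind s) (ind t) = 0) ->
  (exists s, [/\ s \in D, cls s & (0 < gdim M (ind s))%N]) ->
  (exists s, [/\ s \in D, ~~ cls s & (0 < gdim M (ind s))%N]) ->
  decomposable M.
Proof.
move=> /gmul_cross_class_eq0 cross [s1 [_ cls1 dim1]] [s2 [_ cls2 dim2]].
pose U a : 'M[k]_(gdim M a) := if cls (supp a) then 1%:M else 0.
pose W a : 'M[k]_(gdim M a) := if cls (supp a) then 0 else 1%:M.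
have mx1_neq0 p : (0 < p)%N -> (1%:M : 'M[k]_p) != 0.
  by rewrite -mxrank_eq0 mxrank1 -lt0n.
have sub_class b0 a b : degle a b -> ((if cls (supp a) == b0 then 1%:M else 0)
    *m gmul M a b <= if cls (supp b) == b0 then 1%:M else 0)%MS.
  move=> ab; case: eqP => [ca|_]; last by rewrite mul0mx sub0mx.
  case: eqP => [_|cb]; first exact: submx1.
  by rewrite cross ?mulmx0 ?sub0mx // ca eq_sym; apply/eqP.
exists U, W; split.
- by move=> a b /(sub_class true); rewrite /U !eqb_id.
- by move=> a b /(sub_class false); rewrite /W !eqbF_neg; case: (cls _); case: (cls _).
- move=> a; rewrite /U /W; case: (cls (supp a)); apply/andP; split.
  + by rewrite addsmx0_id !submx_refl.
  + by apply/mxdirect_addsP; rewrite capmx0.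
  + by rewrite adds0mx_id !submx_refl.
  + by apply/mxdirect_addsP; rewrite cap0mx.
- by exists (ind s1); rewrite /U supp_ind cls1 mx1_neq0.
- by exists (ind s2); rewrite /W supp_ind (negPf cls2) mx1_neq0.
Qed.

Lemma decomposable_of_graph_class :
  (forall F, F \in D -> (#|F| <= 2)%N) ->
  (forall x, cls set0 != cls [set x] -> gmul M (ind set0) (ind [set x]) = 0) ->
  (forall t x, t \in D -> #|t| = 2%N -> x \in t -> cls [set x] != cls t ->
      gmul M (ind [set x]) (ind t) = 0) ->
  (exists s, [/\ s \in D, cls s & (0 < gdim M (ind s))%N]) ->
  (exists s, [/\ s \in D, ~~ cls s & (0 < gdim M (ind s))%N]) ->
  decomposable M.
Proof.
move=> card_le2 cross0 cross1; apply: decomposable_of_class => s t _ tD st ncls.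
have [est|nst] := eqVneq s t; first by rewrite est eqxx in ncls.
have := proper_card (_ : s \proper t); rewrite properEneq nst st => /(_ isT) ltst.
have := card_le2 t tD; have [s0|s_gt0] := posnP #|s|.
  rewrite (cards0_eq s0) in ncls * => t_le2.
  have [x xt] : exists x, x \in t by apply/set0Pn; rewrite -card_gt0; lia.
  have [t1|t2] : #|t| = 1%N \/ #|t| = 2%N by lia.
    have /cards1P[y ty] : #|t| == 1%N by rewrite t1.
    by rewrite ty in ncls *; exact: cross0.
  rewrite -(gmul_comp M (degle_ind (sub0set [set x])) (degle_ind (_ : [set x] \subset t))).
    have [e|ne] := eqVneq (cls set0) (cls [set x]); last by rewrite cross0 // mul0mx.
    by rewrite (cross1 t x) ?mulmx0 // -e.
  by rewrite sub1set.
move=> t_le2; have /cards1P[x sx] : #|s| == 1%N by apply/eqP; lia.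
by rewrite sx in ncls st *; apply: cross1 => //; [lia | rewrite -sub1set].
Qed.

End ClassSplitting.
End SquareFree.

Lemma set2_other n (F : {set 'I_n}) v :
  #|F| = 2%N -> v \in F -> exists2 w, w != v & F = [set v; w].
Proof.
move=> /eqP/cards2P [x [y [xy ->]]]; rewrite !inE => /orP[]/eqP ->.
  by exists y; rewrite // eq_sym.
by exists x; rewrite // setUC.
Qed.

Lemma connect_cross (T : finType) (e : rel T) (P : pred T) a b :
  connect e a b -> P a -> ~~ P b -> exists x y, [/\ P x, ~~ P y & e x y].
Proof.
case/connectP=> p; elim: p a => [|a' p IH] a /=; first by move=> _ -> ->.
case/andP=> eaa' pa' bE Pa; case Pa': (P a') => nPb; first exact: IH pa' bE Pa' nPb.
by exists a, a'; rewrite Pa' Pa.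
Qed.

Section Trees.
Variables (k : fieldType) (n : nat) (D : {set {set 'I_n}}).

Lemma adj_sym : ssrbool.symmetric (adj D).
Proof. by move=> a b; rewrite /adj eq_sym setUC. Qed.

Lemma adj_edges x y : adj D x y -> [set x; y] \in edges D.
Proof. by case/andP=> xy xyD; rewrite inE xyD cards2 xy. Qed.

Definition adj_off (F : {set 'I_n}) : rel 'I_n :=
  fun x y => adj D x y && ([set x; y] != F).

Definition adj_in (S : {set 'I_n}) : rel 'I_n :=
  fun x y => [&& adj D x y, x \in S & y \in S].

Lemma adj_in_sym S : ssrbool.symmetric (adj_in S).
Proof. by move=> a b; rewrite /adj_in adj_sym (andbC (a \in S)). Qed.

Lemma bdmx_row_adj x y (xy : adj D x y) :
  exists2 eps : k, eps * eps = 1 &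
    row (enum_rank_in (adj_edges xy) [set x; y]) (bdmx k D) =
      eps *: (delta_mx 0 y - delta_mx 0 x).
Proof.
have neqxy : x != y by case/andP: xy.
have ltxy_val : (x < y)%N || (y < x)%N by rewrite -neq_ltn (inj_eq val_inj).
exists (if (x < y)%N then 1 else -1); first by case: ifP; rewrite ?mulrNN mulr1.
apply/rowP=> j; rewrite !mxE enum_rankK_in ?adj_edges //=.
have -> : [exists i in [set x; y], (i < j)%N] = (x < j)%N || (y < j)%N.
  apply/existsP/orP => [[i /andP[]]|[]]; last 2 first.
  - by exists x; rewrite !inE eqxx.
  - by exists y; rewrite !inE eqxx orbT.
  by rewrite !inE => /orP[]/eqP -> ?; [left | right].
rewrite !inE; have [->|jx] := eqVneq j x.
  rewrite (negPf neqxy) ltnn /= sub0r mulr1n.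
  by case: (ltngtP x y) ltxy_val => //= _ _; rewrite ?mulrNN mul1r.
have [->|jy] := eqVneq j y; last by rewrite /= subrr mulr0.
by rewrite ltnn orbF /= subr0 mulr1.
Qed.

Lemma bdmx_path F (FE : F \in edges D) a b : connect (adj_off F) a b ->
  exists c : 'rV[k]_#|edges D|, c 0 (enum_rank_in FE F) = 0 /\
     c *m bdmx k D = delta_mx 0 b - delta_mx 0 a.
Proof.
case/connectP=> p; elim: p a => [|a' p IH] a /= => [_ ->|/andP[/andP[aa' aa'F]]].
  by exists 0; rewrite mxE mul0mx subrr.
move=> /IH/[apply] -[c [cF cB]].
have [eps eps2 row_aa'] := bdmx_row_adj aa'.
exists (c + eps *: delta_mx 0 (enum_rank_in (adj_edges aa') [set a; a'])); split.
  have ne : enum_rank_in (adj_edges aa') [set a; a'] != enum_rank_in FE F.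
    apply: contra aa'F => /eqP/(congr1 enum_val).
    by rewrite !enum_rankK_in ?adj_edges // => ->.
  by rewrite !mxE cF add0r eqxx eq_sym (negPf ne) mulr0.
by rewrite mulmxDl cB -scalemxAl -rowE row_aa' scalerA eps2 scale1r addrA subrK.
Qed.

(* A cycle through the edge [u; w] would give a nonzero 1-cycle. *)
Hypothesis genus0 : genus k D = 0%N.

Lemma genus0_bridge u w (uw : adj D u w) : ~~ connect (adj_off [set u; w]) w u.
Proof.
apply/negP => /(bdmx_path (adj_edges uw)) [c [c0 cB]].
have [eps eps2 row_uw] := bdmx_row_adj uw.
have free : row_free (bdmx k D).
  by rewrite -row_leq_rank; move: genus0; rewrite /genus; have := rank_leq_row (bdmx k D); lia.
set r := enum_rank_in (adj_edges uw) [set u; w] in c0 row_uw.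
have : (c + eps *: delta_mx 0 r) *m bdmx k D == 0.
  by rewrite mulmxDl cB -scalemxAl -rowE row_uw scalerA eps2 scale1r addrA subrK subrr.
rewrite mulmx_free_eq0 // => /eqP/matrixP/(_ 0 r); rewrite !mxE c0 !eqxx add0r mulr1 /=.
by move=> eps0; move: eps2; rewrite eps0 mul0r => /eqP; rewrite eq_sym oner_eq0.
Qed.

Definition induced_connected (S : {set 'I_n}) :=
  forall a b, a \in S -> b \in S -> connect (adj_in S) a b.

Lemma induced_connected_setU1 S y z :
  induced_connected S -> y \in S -> adj D y z -> induced_connected (z |: S).
Proof.
move=> Sconn yS yz.
have S_zS : subrel (adj_in S) (adj_in (z |: S)).
  by move=> p q /and3P[pq pS qS]; rewrite /adj_in pq !inE pS qS !orbT.
have conn_S a b : a \in S -> b \in S -> connect (adj_in (z |: S)) a b.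
  by move=> aS bS; apply: connect_sub (Sconn a b aS bS) => p q /S_zS/connect1.
have conn_z a : a \in S -> connect (adj_in (z |: S)) a z.
  move=> aS; apply: connect_trans (conn_S a y aS yS) (connect1 _).
  by rewrite /adj_in yz !inE yS eqxx !orbT.
move=> a b; rewrite !inE => /orP[/eqP->|aS] /orP[/eqP->|bS].
- exact: connect0.
- by rewrite (sym_connect_sym (adj_in_sym _)); apply: conn_z.
- exact: conn_z.
- exact: conn_S.
Qed.

(* Two neighbours of z in S would close a cycle through z. *)
Lemma tree_unique_neighbor S z x y : induced_connected S -> z \notin S ->
  x \in S -> y \in S -> adj D z x -> adj D z y -> x = y.
Proof.
move=> Sconn zS xS yS zx zy; apply/eqP; apply: contraT => nxy.
case/negP: (genus0_bridge zx); apply: (connect_trans (y := y)).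
  apply: connect_sub (Sconn x y xS yS) => p q /and3P[pq pS qS]; apply: connect1.
  rewrite /adj_off pq; apply: contraNN zS => /eqP zxpq.
  by have := set21 z x; rewrite -zxpq !inE => /orP[]/eqP->.
apply: connect1; rewrite /adj_off adj_sym zy; apply/negP => /eqP yzzx.
have := set21 y z; rewrite yzzx !inE => /orP[]/eqP yzx.
  by rewrite -yzx yS in zS.
by rewrite yzx eqxx in nxy.
Qed.

Variables (d : {set 'I_n} -> nat) (t : 'I_n -> forall F : {set 'I_n}, 'rV[k]_(d F)).
Hypothesis t_edge : forall x y, adj D x y ->
  [/\ t x [set x; y] != 0, t y [set x; y] != 0 & d [set x; y] = 1%N].

Definition scaling_on (S : {set 'I_n}) (lam : 'I_n -> k) :=
  (forall v, v \in S -> lam v != 0) /\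
  (forall x y, x \in S -> y \in S -> adj D x y ->
     lam x *: t x [set x; y] = lam y *: t y [set x; y]).

Lemma scaling_on_setU1 S lam y z : induced_connected S -> scaling_on S lam ->
  y \in S -> z \notin S -> adj D y z ->
  exists lam', scaling_on (z |: S) lam'.
Proof.
move=> Sconn [lam_neq0 lam_eq] yS zS yz.
have [t_y t_z d1] := t_edge yz.
have [a ta] := rV_dim1_scale (lam y *: t y [set y; z]) d1 t_z.
have a_neq0 : a != 0.
  apply: contraNneq t_y => a0; move: ta; rewrite a0 scale0r => /eqP.
  by rewrite scalemx_eq0 (negPf (lam_neq0 _ yS)).
have nbr_z x : x \in S -> adj D z x -> x = y.
  by move=> xS zx; rewrite (tree_unique_neighbor Sconn zS xS yS zx) // adj_sym.
exists (fun v => if v == z then a else lam v); split.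
  by move=> v; rewrite !inE; case: eqP => // _ /lam_neq0.
move=> x x'; rewrite !inE; case: eqP => [->|_] /= xS; case: eqP => [->|_] /= x'S.
- by rewrite /adj eqxx.
- by move/(nbr_z _ x'S) ->; rewrite setUC ta.
- by rewrite adj_sym => /(nbr_z _ xS) ->.
- exact: lam_eq.
Qed.

Hypothesis connD : connected_cx D.

Lemma tree_scaling : exists lam, scaling_on setT lam.
Proof.
have [n0 _|no_vertex] := pickP (fun _ : 'I_n => true); last first.
  by exists (fun=> 1); split=> [v|v]; have := no_vertex v.
have grow m : (0 < m <= n)%N -> exists (S : {set 'I_n}) lam,
    [/\ #|S| = m, induced_connected S & scaling_on S lam].
  elim: m => [//|m IH] /andP[_ lemn]; have [m0|m_gt0] := posnP m.
    exists [set n0], (fun=> 1); split; first by rewrite m0 cards1.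
      by move=> a b; rewrite !inE => /eqP-> /eqP->.
    by split=> [v _|x y]; rewrite ?oner_eq0 // !inE => /eqP-> /eqP->; rewrite /adj eqxx.
  have [S [lam [cardS Sconn lamS]]] := IH (introT andP (conj m_gt0 (ltnW lemn))).
  have [z zS] : exists z, z \notin S.
    apply/existsP; rewrite -negb_forall; apply: contraTN lemn => /forallP allS.
    have ST : S = setT by apply/setP=> v; rewrite inE allS.
    by rewrite -cardS ST cardsT card_ord ltnn.
  have [a aS] : exists a, a \in S by apply/set0Pn; rewrite -card_gt0 cardS.
  have [y [z' [yS z'S yz']]] := connect_cross (P := mem S) (connD a z) aS zS.
  have [lam' lam'S] := scaling_on_setU1 Sconn lamS yS z'S yz'.
  exists (z' |: S), lam'; split=> //; first by rewrite cardsU1 z'S cardS.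
  exact: induced_connected_setU1 yS yz'.
have := grow n; rewrite leqnn (leq_ltn_trans (leq0n n0) (ltn_ord n0)).
case=> // S [lam [cardS _ lamS]].
have ST : S = setT by apply/eqP; rewrite eqEcard subsetT cardsT card_ord cardS leqnn.
by exists lam; rewrite -ST.
Qed.

End Trees.

Section GraphModules.
Variables (k : fieldType) (n : nat) (D : {set {set 'I_n}}) (M : gmod k n).
Hypotheses (sqM : sqfree M) (graphD : simplicial_graph D) (genus0 : genus k D = 0%N).
Hypotheses (suppD : support_on M D) (indecM : ~ decomposable M).
Hypothesis dim_vertex : forall v, gdim M (ind [set v]) = 1%N.
Hypothesis dim_edge : loc_rank1 M D.

Local Notation phi s t := (gmul M (ind s) (ind t)).

Lemma phi_vertex_neq0 v : phi [set v] [set v] != 0.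
Proof. by rewrite gmul_id -mxrank_eq0 mxrank1 dim_vertex. Qed.

Lemma phi0_eq0_across (e : {set 'I_n}) x y : x \in e -> y \in e ->
  phi set0 [set x] *m phi [set x] e = 0 -> phi [set y] e != 0 -> phi set0 [set y] = 0.
Proof.
move=> xe ye phix_eq0 phiy_neq0.
have le0 (z : 'I_n) : degle (ind set0) (ind [set z]) by apply: degle_ind; rewrite sub0set.
have le1 (z : 'I_n) : z \in e -> degle (ind [set z]) (ind e).
  by move=> ze; apply: degle_ind; rewrite sub1set.
apply/eqP; rewrite -(mulmx_free_eq0 _ (row_free_dim1 (dim_vertex y) phiy_neq0)).
by rewrite (gmul_comp M (le0 y) (le1 y ye)) -(gmul_comp M (le0 x) (le1 x xe)) phix_eq0.
Qed.

Lemma decomposable_of_isolated_edge v w : adj D v w ->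
  phi [set v] [set v; w] = 0 -> phi [set w] [set v; w] = 0 -> decomposable M.
Proof.
move=> /andP[vw vwD] phiv0 phiw0; set F := [set v; w] in vwD phiv0 phiw0.
have [_ vertD card_le2 _] := graphD.
have card2 : #|F| = 2%N by rewrite cards2 vw.
have not_F (s : {set 'I_n}) : (#|s| < 2)%N -> (s == F) = false.
  by move=> s_lt2; apply/negbTE/eqP => sF; move: s_lt2; rewrite sF card2.
apply: (decomposable_of_graph_class sqM (cls := fun s => s == F) suppD) => //.
- by move=> x; rewrite !not_F ?cards0 ?cards1.
- move=> t x _ _ xt; rewrite not_F ?cards1 //; case: (t =P F) => // tF _.
  by move: xt; rewrite tF !inE => /orP[]/eqP->.
- by exists F; rewrite eqxx vwD dim_edge.
- by exists [set v]; rewrite vertD not_F ?cards1 ?dim_vertex.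
Qed.

Definition live_adj : rel 'I_n :=
  fun y z => [&& adj D y z, phi [set y] [set y; z] != 0 & phi [set z] [set y; z] != 0].

(* C is the component of w in the graph of edges whose two vertex maps are
   both nonzero.  The maps from M_set0 into the vertices of C vanish: at w
   because phi_{set0,w} phi_{w,e} = phi_{set0,v} phi_{v,e} = 0 with phi_{w,e}
   injective, and then likewise along each edge of C. *)
Lemma decomposable_of_dead_edge v w : adj D v w ->
  phi [set v] [set v; w] = 0 -> phi [set w] [set v; w] != 0 -> decomposable M.
Proof.
move=> vw phiv0 phiw_neq0.
have [_ vertD _ _] := graphD.
pose C := [set y | connect live_adj w y].
have wC : w \in C by rewrite inE connect0.
have vC : v \notin C.
  rewrite inE; apply: contraNN (genus0_bridge genus0 vw) => /connect_sub; apply.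
  move=> a b /and3P[ab phia phib]; apply/connect1/andP; split=> //; apply/eqP => abvw.
  have : v \in [set a; b] by rewrite abvw set21.
  by rewrite !inE => /orP[]/eqP av; [move: phia | move: phib]; rewrite abvw -av phiv0 eqxx.
have phi0C y : y \in C -> phi set0 [set y] = 0.
  have path_phi0 p (b : 'I_n) : path live_adj b p ->
      phi set0 [set b] = 0 -> phi set0 [set last b p] = 0.
    elim: p b => [//|a p IH] b /= /andP[/and3P[_ _ phia] pth] phi0b; apply: IH pth _.
    by apply: (phi0_eq0_across (x := b)) phia; rewrite ?set21 ?set22 ?phi0b ?mul0mx.
  rewrite inE => /connectP[p pth ->]; apply: path_phi0 pth _.
  by apply: (phi0_eq0_across (x := v)) phiw_neq0; rewrite ?set21 ?set22 ?phiv0 ?mulmx0.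
pose cls (s : {set 'I_n}) := [exists y in s, (y \in C) && (phi [set y] s != 0)].
have cls1 x : cls [set x] = (x \in C).
  apply/existsP/idP => [[y /andP[]]|xC]; first by rewrite inE => /eqP-> /andP[].
  by exists x; rewrite inE eqxx xC phi_vertex_neq0.
have cls0 : cls set0 = false by apply/existsP => -[y]; rewrite inE.
apply: (decomposable_of_graph_class sqM (cls := cls) suppD).
- by case: graphD.
- by move=> x; rewrite cls1 cls0; case xC: (x \in C) => // _; apply: phi0C.
- move=> t x tD t2 xt; rewrite cls1; case xC: (x \in C); case clst: (cls t) => // _.
    by move/negbT/existsPn: clst => /(_ x); rewrite xt xC negbK => /eqP.
  case/existsP: clst => y /and3P[yt yC phiy]; apply/eqP; apply: contraFT xC => phix.
  have [z zy tE] := set2_other t2 yt.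
  move: xt phix; rewrite tE in_set2 => /orP[]/eqP-> // phiz.
  rewrite inE; apply: (connect_trans (y := y)); first by rewrite inE in yC.
  by rewrite -tE in phiz; apply/connect1/and3P; rewrite /adj eq_sym zy -tE tD phiy phiz.
- by exists [set w]; rewrite vertD cls1 wC dim_vertex.
- by exists [set v]; rewrite vertD cls1 vC dim_vertex.
Qed.

Lemma phi_vertex_edge_neq0 F v : F \in D -> #|F| = 2%N -> v \in F -> phi [set v] F != 0.
Proof.
move=> FD card2 vF; have [w wv FE] := set2_other card2 vF.
have vw : adj D v w by rewrite /adj eq_sym wv -FE FD.
rewrite FE; apply/negP => /eqP phiv0; apply: indecM.
have [phiw0|phiw_neq0] := eqVneq (phi [set w] [set v; w]) 0.
  exact: decomposable_of_isolated_edge vw phiv0 phiw0.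
exact: decomposable_of_dead_edge vw phiv0 phiw_neq0.
Qed.

End GraphModules.

Lemma giso_refl (k : fieldType) n (M : gmod k n) : giso M M.
Proof.
exists (fun a => 1%:M); split=> [a|a b _]; first exact: isomx1.
by rewrite mul1mx mulmx1.
Qed.

Theorem mainTheorem7 (k : fieldType) (n : nat) (D : {set {set 'I_n}})
    (M : gmod k n) :
  simplicial_graph D -> connected_cx D -> genus k D = 0%N ->
  fingen M -> sqfree M -> indecomposable M ->
  support_on M D -> loc_rank1 M D -> multideg0 M ->
  exists N : gmod k n, giso M N /\
    exists (bv : forall v : 'I_n, 'rV[k]_(gdim N (ind [set v])))
           (be : forall F : {set 'I_n}, 'rV[k]_(gdim N (ind F))),
      [/\ forall v, bv v != 0,
          forall F, F \in D -> #|F| = 2%N -> be F != 0 &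
          forall (v : 'I_n) (F : {set 'I_n}), F \in D -> #|F| = 2%N -> v \in F ->
            bv v *m gmul N (ind [set v]) (ind F) = be F].
Proof.
move=> graphD connD genus0 _ sqM [_ indecM] suppD dim_edge mdeg0.
have dim_vertex v : gdim M (ind [set v]) = 1%N.
  by have /eqP := mdeg0 v; rewrite subr_eq0 => /eqP[].
pose t v F : 'rV[k]_(gdim M (ind F)) := const_mx 1 *m gmul M (ind [set v]) (ind F).
have t_neq0 F v : F \in D -> #|F| = 2%N -> v \in F -> t v F != 0.
  move=> FD F2 vF; rewrite mulmx_free_eq0 ?const_mx1_neq0 ?dim_vertex //.
  exact/(row_free_dim1 (dim_vertex v))/(phi_vertex_edge_neq0 sqM graphD).
have t_edge x y : adj D x y ->
    [/\ t x [set x; y] != 0, t y [set x; y] != 0 & gdim M (ind [set x; y]) = 1%N].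
  case/andP=> xy xyD; have xy2 : #|[set x; y]| = 2%N by rewrite cards2 xy.
  by split; [apply: t_neq0 | apply: t_neq0 | apply: dim_edge]; rewrite ?set21 ?set22.
have [lam [lam_neq0 lam_eq]] := tree_scaling genus0 t_edge connD.
exists M; split; first exact: giso_refl.
exists (fun v => lam v *: const_mx 1),
  (fun F : {set 'I_n} => if [pick v in F] is Some p then lam p *: t p F else 0); split.
- by move=> v; rewrite scalemx_eq0 negb_or lam_neq0 ?inE // const_mx1_neq0 ?dim_vertex.
- move=> F FD F2; case: pickP => [p pF|F0]; last by move: F2; rewrite (eq_card0 F0).
  by rewrite scalemx_eq0 negb_or lam_neq0 ?inE ?t_neq0.
move=> v F FD F2 vF; case: pickP => [p pF|F0]; last by have := F0 v; rewrite vF.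
rewrite -scalemxAl -/(t v F); have [->//|vp] := eqVneq v p.
have [w wv FE] := set2_other F2 vF.
have pw : p = w by move: pF; rewrite FE !inE eq_sym (negPf vp) => /eqP.
rewrite FE pw lam_eq ?inE //.
by rewrite /adj eq_sym wv -FE FD.
Qed.
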